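(* Let $n>1$ and $k\ge 1$ be integers and let $t_1,\ldots,t_k$ be positive divisors of $n$. There exists $\varepsilon<1$ such that the family GRDH with parameters $n,k,t_1,\ldots,t_k$ is $\varepsilon$-almost-$\Delta$-universal if and only if $n$ is odd and $t_1=\cdots=t_k=1$. Moreover, if $n$ is odd and $t_1=\cdots=t_k=1$, then GRDH (i.e., RDH) is $\frac{1}{p-1}$-almost-$\Delta$-universal, where $p$ is the smallest prime divisor of $n$, and this bound is tight: there exist distinct $\mathbf{m},\mathbf{m}'\in\mathbb{Z}_n^k$ and $b\in\mathbb{Z}_n$ with $\Pr_{\mathbf{x}}[\Upsilon_{\mathbf{x}}(\mathbf{m})-\Upsilon_{\mathbf{x}}(\mathbf{m}')=b]=\frac{1}{p-1}$.
   Context: Let $n>1$, $k\ge1$ be integers and $t_1,\ldots,t_k$ positive divisors of $n$. The family GRDH consists of the functions $\Upsilon_{\mathbf{x}}:\mathbb{Z}_n^k\to\mathbb{Z}_n$, $\Upsilon_{\mathbf{x}}(\mathbf{m})=\sum_{i=1}^k m_ix_i \bmod n$, indexed by keys $\mathbf{x}=\langle x_1,\ldots,x_k\rangle\in\mathbb{Z}_n^k$ satisfying $\gcd(x_i,n)=t_i$ for $1\le i\le k$. When $t_1=\cdots=t_k=1$ the family is called RDH. All probabilities are over a key chosen uniformly at random from the set of admissible keys. The family is $\varepsilon$-almost-$\Delta$-universal if for all distinct $\mathbf{m},\mathbf{m}'\in\mathbb{Z}_n^k$ and all $b\in\mathbb{Z}_n$, $\Pr_{\mathbf{x}}[\Upsilon_{\mathbf{x}}(\mathbf{m})-\Upsilon_{\mathbf{x}}(\mathbf{m}')=b]\le\varepsilon$,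 subtraction taken in $\mathbb{Z}_n$. *)

From HB Require Import structures.
From mathcomp Require Import all_boot all_order all_algebra.
Set Implicit Arguments. Unset Strict Implicit. Unset Printing Implicit Defensive.
Import Order.TTheory GRing.Theory Num.Theory.

(* Elements of Z_n are represented by 'I_n (values 0..n-1); vectors in Z_n^k
   by finite functions {ffun 'I_k -> 'I_n}. *)

Definition grdh_keys (n k : nat) (t : 'I_k -> nat) : {set {ffun 'I_k -> 'I_n}} :=
  [set x : {ffun 'I_k -> 'I_n} | [forall i, gcdn (x i) n == t i]].

Definition upsilon (n k : nat) (x m : {ffun 'I_k -> 'I_n}) : nat :=
  (\sum_(i < k) (m i : nat) * (x i : nat)) %% n.

Definition upsilon_diff (n k : nat) (x m m' : {ffun 'I_k -> 'I_n}) : nat :=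
  (upsilon x m + (n - upsilon x m')) %% n.

Definition grdh_prob (n k : nat) (t : 'I_k -> nat)
    (m m' : {ffun 'I_k -> 'I_n}) (b : 'I_n) : rat :=
  (#|[set x in grdh_keys n t | upsilon_diff x m m' == b]|%:R
    / #|grdh_keys n t|%:R)%R.

Definition almost_delta_universal (n k : nat) (t : 'I_k -> nat) (eps : rat) : Prop :=
  forall (m m' : {ffun 'I_k -> 'I_n}) (b : 'I_n), m != m' ->
    (grdh_prob t m m' b <= eps)%R.

(* If some [t_j > 1], the message [(n/t_j) e_j] has difference [0] under every
   key, and if all [t_i = 1] but [n] is even, [(n/2) e_j] has difference [n/2]
   under every key (units are odd); in both cases a collision has probability 1.
   For RDH, let [D = m - m'] with [D_j != 0]. Then [D_j * u = D_j * w] forces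
   [u = w] modulo some prime [q | n], and [q >= p]. Multiplying the [j]-th key
   coordinate by [p - 1] units with distinct nonzero residues mod [q] sends the
   keys with [sum_i D_i x_i = b] injectively into the keys, [p - 1] times
   over, so at most a [1/(p-1)] fraction of keys hit [b]. For [D = (n/p) e_j]
   and [b = n/p] these copies exhaust all keys, so the bound is attained. *)

From mathcomp Require Import all_boot all_order all_algebra zify.
Import Order.TTheory GRing.Theory Num.Theory.
Set Implicit Arguments. Unset Strict Implicit.

Section UnitKeys.
Variables (R : finComUnitRingType) (I : finType).
Local Open Scope ring_scope.

Definition unit_keys : {set {ffun I -> R}} :=
  [set x : {ffun I -> R} | [forall i, x i \is a GRing.unit]].

Definition keys_with_sum (D : I -> R) (b : R) : {set {ffun I -> R}} :=
  [set x in unit_keys | \sum_i D i * x i == b].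

Lemma in_keys_with_sum D b x :
  (x \in keys_with_sum D b) = (x \in unit_keys) && (\sum_i D i * x i == b).
Proof. by rewrite inE. Qed.

Definition scale_at (j : I) (c : R) (x : {ffun I -> R}) : {ffun I -> R} :=
  [ffun l => if l == j then c * x l else x l].

Lemma scale_at_unit_keys j c x :
  c \is a GRing.unit -> x \in unit_keys -> scale_at j c x \in unit_keys.
Proof.
rewrite !inE => cU /forallP xU; apply/forallP => l; rewrite ffunE.
by case: ifP => _; rewrite ?unitrM ?cU ?xU.
Qed.

Variables (D : I -> R) (j : I) (s : nat) (v : 'I_s -> R).
Hypotheses (v_unit : forall a, v a \is a GRing.unit)
           (Dv_inj : injective (fun a => D j * v a)).

Let rescale (p : 'I_s * {ffun I -> R}) := scale_at j (v p.1) p.2.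

(* Two keys with the same sum that agree off [j] have the same [D j * x j];
   since [x j] is a unit this pins down the scaling factor. *)
Lemma rescale_inj b : {in setX [set: 'I_s] (keys_with_sum D b) &, injective rescale}.
Proof.
move=> [a x] [a' y]; rewrite !inE /= => /andP[/forallP xU /eqP Sx].
move=> /andP[_ /eqP Sy] /ffunP Exy.
have Eoff l : l != j -> x l = y l by move=> /negbTE lj; move: (Exy l); rewrite !ffunE lj.
have Ej : v a * x j = v a' * y j by move: (Exy j); rewrite !ffunE eqxx.
have Dxy : D j * x j = D j * y j.
  move: Sx; rewrite -Sy (bigD1 j) //= [X in _ = X -> _](bigD1 j) //=.
  by rewrite (eq_bigr (fun i => D i * y i)) => [/addIr|i /Eoff ->].
have aa' : a = a'.
  apply: Dv_inj; apply: (mulIr (xU j)) => /=.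
  by rewrite -mulrA Ej mulrCA -Dxy mulrCA mulrA.
subst a'; congr pair; apply/ffunP => l.
by case: (eqVneq l j) => [->|/Eoff //]; apply: (mulrI (v_unit a)).
Qed.

Lemma card_rescale b :
  #|rescale @: setX [set: 'I_s] (keys_with_sum D b)| = (s * #|keys_with_sum D b|)%N.
Proof. by rewrite card_in_imset ?cardsX ?cardsT ?card_ord //; apply: rescale_inj. Qed.

Lemma card_keys_with_sum_le b : (s * #|keys_with_sum D b| <= #|unit_keys|)%N.
Proof.
rewrite -card_rescale; apply/subset_leq_card/subsetP => y /imsetP[[a x]].
case/setXP=> _; rewrite in_keys_with_sum => /andP[xK _] ->; exact: scale_at_unit_keys.
Qed.

(* [x |-> (a, scale_at j (v a)^-1 x)], where [D j * x j = D j * v a], inverts [rescale]. *)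
Lemma card_keys_with_sum_eq :
  (forall l, l != j -> D l = 0) ->
  (forall u, u \is a GRing.unit -> exists a, D j * u = D j * v a) ->
  (s * #|keys_with_sum D (D j)|)%N = #|unit_keys|.
Proof.
move=> D0 Dv_onto; apply/eqP; rewrite eqn_leq card_keys_with_sum_le -card_rescale.
apply/subset_leq_card/subsetP => x xK; have := xK; rewrite inE => /forallP xU.
have [a Ha] := Dv_onto _ (xU j).
apply/imsetP; exists (a, scale_at j (v a)^-1 x).
  apply/setXP; split=> //; rewrite in_keys_with_sum scale_at_unit_keys ?unitrV //=.
  rewrite (bigD1 j) //= big1 ?addr0 => [|l /D0 ->]; last by rewrite mul0r.
  by rewrite ffunE eqxx mulrCA Ha mulrCA mulVr ?mulr1.
apply/ffunP => l; rewrite !ffunE; case: eqP => // _.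
by rewrite mulrA mulrV ?mul1r.
Qed.

End UnitKeys.

Lemma eqn_modMl_gcd n d u w : 0 < n ->
  d * u = d * w %[mod n] -> u = w %[mod n %/ gcdn d n].
Proof.
move=> n_gt0; set g := gcdn d n.
have g_gt0 : 0 < g by rewrite gcdn_gt0 n_gt0 orbT.
have dE : d = g * (d %/ g) by rewrite mulnC divnK // dvdn_gcdl.
have nE : n = g * (n %/ g) by rewrite mulnC divnK // dvdn_gcdr.
have co : coprime (n %/ g) (d %/ g).
  rewrite /coprime -(eqn_pmul2l g_gt0) muln_gcdr -nE -dE muln1 gcdnC.
  exact: eqxx.
wlog le_uw : u w / u <= w.
  move=> Hwlog; case: (leqP u w) => [|/ltnW] le E; first exact: Hwlog.
  by apply/esym/Hwlog => //; apply/esym.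
move=> E; apply/esym/eqP; rewrite eqn_mod_dvd //.
have : d * w == d * u %[mod n] by rewrite E.
by rewrite eqn_mod_dvd ?leq_mul // -mulnBr {1}nE {1}dE -mulnA dvdn_pmul2l // Gauss_dvdr.
Qed.

(* CRT on [n = n`_q * n`_q']: residue [r] modulo the [q]-part, [1] modulo the rest. *)
Lemma coprime_lift_mod n q r : 0 < n -> prime q -> q %| n -> 0 < r < q ->
  exists c, coprime n c /\ c %% q = r.
Proof.
move=> n_gt0 q_pr q_dvd /andP[r_gt0 r_lt].
set Q := n`_q; set N := n`_q^'.
have QN : Q * N = n by apply: partnC.
have co : coprime Q N by apply: coprime_partC.
have e_gt0 : 0 < logn q n by rewrite logn_gt0 mem_primes q_pr n_gt0 q_dvd.
have q_dvdQ : q %| Q by rewrite /Q p_part -(prednK e_gt0) expnS dvdn_mulr.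
set c := chinese Q N r 1.
have cq : c %% q = r.
  by rewrite -(modn_dvdm c q_dvdQ) (chinese_modl co) modn_dvdm // modn_small.
exists c; split=> //.
rewrite -QN coprimeMl; apply/andP; split.
  rewrite /Q p_part coprime_pexpl // -coprime_modr cq prime_coprime //.
  by apply/negP => /(dvdn_leq r_gt0); rewrite leqNgt r_lt.
by rewrite -coprime_modr (chinese_modr co) coprime_modr coprimen1.
Qed.

Section ZnArithmetic.
Variable n' : nat.
Local Notation n := n'.+2.
Local Notation Zn := 'I_n.

Lemma Zn_unitE (x : Zn) : (x \is a GRing.unit) = coprime n x.
Proof. by rewrite -unitZpE // natr_Zp. Qed.

Lemma Zn_unit_mod_prime_gt0 (u : Zn) q :
  u \is a GRing.unit -> prime q -> q %| n -> 0 < u %% q.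
Proof.
rewrite Zn_unitE lt0n => u_co q_pr q_dvd; apply: contraTneq isT => /eqP u0.
have : coprime q u by apply: coprime_dvdl q_dvd u_co.
by rewrite prime_coprime // /dvdn u0.
Qed.

Lemma Zn_units_with_residues q s : prime q -> q %| n -> s < q ->
  exists v : 'I_s -> Zn, forall a, v a \is a GRing.unit /\ v a %% q = a.+1.
Proof.
move=> q_pr q_dvd s_lt.
suff /fin_all_exists : forall a : 'I_s, exists v : Zn,
    v \is a GRing.unit /\ v %% q = a.+1 by [].
move=> a; have [|c [c_co cq]] := @coprime_lift_mod n q a.+1 isT q_pr q_dvd.
  by rewrite /= (leq_ltn_trans (ltn_ord a) s_lt).
exists (inZp c); split; first by rewrite Zn_unitE /= coprime_modr.
by rewrite /= modn_dvdm.
Qed.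

(* [d * u = d * w] forces [u = w] modulo [n / gcd(d, n) > 1], hence modulo any
   prime factor of it. *)
Lemma Zn_mulr_cancel_mod_prime (d : Zn) : d != 0%R ->
  exists q, [/\ prime q, q %| n & forall u w : Zn, (d * u = d * w)%R -> u %% q = w %% q].
Proof.
move=> d_neq0; set g := gcdn d n; set M := n %/ g.
have d_gt0 : 0 < d by rewrite lt0n; apply: contraNneq d_neq0 => d0; apply/eqP/val_inj.
have nE : n = g * M by rewrite mulnC divnK // dvdn_gcdr.
have M_gt1 : 1 < M.
  have g_le : g <= d by apply: dvdn_leq => //; apply: dvdn_gcdl.
  have d_lt : d < n := ltn_ord d.
  nia.
exists (pdiv M); split; first exact: pdiv_prime.
  by apply: dvdn_trans (pdiv_dvd M) _; rewrite nE dvdn_mull.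
move=> u w /(congr1 val) /= /(eqn_modMl_gcd (isT : 0 < n)).
by rewrite -/g -/M => uw; rewrite -(modn_dvdm u (pdiv_dvd M)) uw modn_dvdm // pdiv_dvd.
Qed.

Lemma val_Zn_divn c : 1 < c -> val ((n %/ c)%:R : Zn)%R = n %/ c.
Proof. by move=> c_gt1; rewrite Zp_nat /= modn_small // ltn_Pdiv. Qed.

Lemma Zn_divn_neq0 c : 1 < c -> c %| n -> ((n %/ c)%:R : Zn)%R != 0%R.
Proof.
move=> c_gt1 c_dvd; rewrite -(inj_eq val_inj) val_Zn_divn //= -lt0n.
by rewrite divn_gt0 ?(dvdn_leq _ c_dvd) // ltnW.
Qed.

Lemma Zn_mul_ndivp_eq (u w : Zn) : let p := pdiv n in
  (((n %/ p)%:R * u = (n %/ p)%:R * w :> Zn)%R) <-> u %% p = w %% p.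
Proof.
move=> p; have p_pr : prime p by apply: pdiv_prime.
have nE : n = n %/ p * p by rewrite divnK // pdiv_dvd.
have np_gt0 : 0 < n %/ p by rewrite divn_gt0 ?prime_gt0 // dvdn_leq // pdiv_dvd.
have valE := val_Zn_divn (prime_gt1 p_pr).
have key a c : ((n %/ p * a) %% n == (n %/ p * c) %% n) = (a %% p == c %% p).
  by rewrite {2 4}nE -!muln_modr eqn_pmul2l.
split=> [/(congr1 val)|E]; last by apply: val_inj; rewrite /= valE; apply/eqP; rewrite key E.
by rewrite /= valE => /eqP; rewrite key => /eqP.
Qed.

End ZnArithmetic.

Lemma ler_ratio_inv (F : numFieldType) (a b s : nat) :
  0 < b -> 0 < s -> s * a <= b -> (a%:R / b%:R <= 1 / s%:R :> F)%R.
Proof.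
move=> b_gt0 s_gt0 le_sab.
rewrite ler_pdivrMr ?ltr0n // mulrC mulrA ler_pdivlMr ?ltr0n // mulr1.
by rewrite -natrM ler_nat mulnC.
Qed.

Lemma ratio_mul_inv (F : numFieldType) (a s : nat) :
  0 < s * a -> (a%:R / (s * a)%:R = 1 / s%:R :> F)%R.
Proof.
rewrite muln_gt0 => /andP[s_gt0 a_gt0].
by rewrite natrM invfM mulrCA divff ?mulr1 ?mul1r // pnatr_eq0 -lt0n.
Qed.

Lemma inv_pdiv_pred_lt1 n : 1 < n -> odd n -> (1 / ((pdiv n)%:R - 1) < 1 :> rat)%R.
Proof.
move=> n_gt1 n_odd; have p_pr := pdiv_prime n_gt1.
have p_neq2 : pdiv n != 2.
  by apply: contraTneq n_odd => p2; rewrite -dvdn2 -p2 pdiv_dvd.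
have p_gt2 : 2 < pdiv n by rewrite ltn_neqAle eq_sym p_neq2 prime_gt1.
rewrite ltr_pdivrMr ?mul1r ?subr_gt0 ?ltr1n ?prime_gt1 //.
by rewrite ltrBrDr -[(1 + 1)%R]/(2%:R)%R ltr_nat.
Qed.

Section GRDH.
Variables (n' k : nat).
Local Notation n := n'.+2.
Local Notation Zn := 'I_n.

Lemma upsilonE (x m : {ffun 'I_k -> Zn}) : upsilon x m = val (\sum_i m i * x i)%R.
Proof.
have -> : (\sum_i m i * x i)%R = (\sum_i (m i : nat) * (x i : nat))%N%:R%R :> Zn.
  by rewrite natr_sum; apply: eq_bigr => i _; rewrite natrM !natr_Zp.
by rewrite Zp_nat.
Qed.

Lemma upsilon_diffE (x m m' : {ffun 'I_k -> Zn}) :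
  upsilon_diff x m m' = val (\sum_i (m i - m' i) * x i)%R.
Proof.
have -> : (\sum_i (m i - m' i) * x i = \sum_i m i * x i - \sum_i m' i * x i)%R.
  by rewrite -sumrB; apply: eq_bigr => i _; rewrite mulrBl.
by rewrite /upsilon_diff !upsilonE /= modnDmr.
Qed.

Lemma grdh_keys1 (t : 'I_k -> nat) : (forall i, t i = 1) -> grdh_keys n t = unit_keys Zn 'I_k.
Proof.
move=> t1; apply/setP => x; rewrite !inE; apply: eq_forallb => i.
by rewrite t1 Zn_unitE /coprime gcdnC.
Qed.

Lemma grdh_keys_gt0 (t : 'I_k -> nat) : (forall i, 0 < t i /\ t i %| n) -> 0 < #|grdh_keys n t|.
Proof.
move=> t_dvd; apply/card_gt0P; exists [ffun i => (t i)%:R%R]; rewrite inE.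
apply/forallP => i; rewrite ffunE Zp_nat /= gcdn_modl.
by apply/eqP/gcdn_idPl; case: (t_dvd i).
Qed.

Lemma rdh_probE (t : 'I_k -> nat) (m m' : {ffun 'I_k -> Zn}) (b : Zn) : (forall i, t i = 1) ->
  grdh_prob t m m' b =
  (#|keys_with_sum (fun i => m i - m' i)%R b|%:R / #|unit_keys Zn 'I_k|%:R)%R.
Proof.
move=> t1; rewrite /grdh_prob grdh_keys1 //; congr (_%:R / _)%R; apply: eq_card => x.
by rewrite !inE upsilon_diffE val_eqE.
Qed.

Definition delta_ffun (j : 'I_k) (a : Zn) : {ffun 'I_k -> Zn} :=
  [ffun l => if l == j then a else 0%R].

Lemma delta_ffun_eq0 j a : (delta_ffun j a == [ffun => 0%R]) = (a == 0%R).
Proof.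
apply/eqP/eqP => [/ffunP/(_ j)|->]; first by rewrite !ffunE eqxx.
by apply/ffunP => l; rewrite !ffunE; case: ifP.
Qed.

Lemma delta_ffun_sum (j : 'I_k) (a : Zn) (x : {ffun 'I_k -> Zn}) :
  (\sum_i (delta_ffun j a i - [ffun => 0%R] i) * x i = a * x j)%R.
Proof.
rewrite (bigD1 j) //= big1 => [|l /negbTE lj]; rewrite !ffunE ?eqxx ?lj subr0 ?mul0r //.
exact: addr0.
Qed.

Lemma grdh_not_adu_const (t : 'I_k -> nat) j (a b : Zn) eps :
  (forall i, 0 < t i /\ t i %| n) -> a != 0%R ->
  (forall x, x \in grdh_keys n t -> (a * x j)%R = b) ->
  (eps < 1)%R -> ~ almost_delta_universal n t eps.
Proof.
move=> t_dvd a_neq0 ab eps_lt1 /(_ (delta_ffun j a) [ffun => 0%R] b).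
rewrite delta_ffun_eq0 a_neq0 => /(_ isT); apply/negP; rewrite -ltNge.
rewrite /grdh_prob (_ : [set x in _ | _] = grdh_keys n t) ?divff // ?pnatr_eq0 -?lt0n.
  exact: grdh_keys_gt0.
apply/setP => x; rewrite inE; case: (boolP (x \in _)) => //= xK.
by rewrite upsilon_diffE delta_ffun_sum ab // eqxx.
Qed.

Lemma grdh_not_adu_gcd (t : 'I_k -> nat) j eps :
  (forall i, 0 < t i /\ t i %| n) -> t j != 1 ->
  (eps < 1)%R -> ~ almost_delta_universal n t eps.
Proof.
move=> t_dvd tj_neq1; have [tj_gt0 tj_dvd] := t_dvd j.
have tj_gt1 : 1 < t j by rewrite ltn_neqAle eq_sym tj_neq1.
apply: (grdh_not_adu_const (j := j) (b := 0%R) t_dvd (Zn_divn_neq0 tj_gt1 tj_dvd)).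
move=> x; rewrite inE => /forallP /(_ j) /eqP xj.
have /dvdnP[y xjE] : t j %| x j by rewrite -xj dvdn_gcdl.
apply: val_inj; rewrite /= val_Zn_divn // xjE.
by rewrite mulnCA divnK // modnMl.
Qed.

(* For [n] even every unit [x] is odd, so [(n/2) * x = n/2]. *)
Lemma rdh_not_adu_even (t : 'I_k -> nat) (j : 'I_k) eps :
  (forall i, t i = 1) -> ~~ odd n ->
  (eps < 1)%R -> ~ almost_delta_universal n t eps.
Proof.
move=> t1 n_even; have two_dvd : 2 %| n by rewrite dvdn2.
apply: (grdh_not_adu_const (j := j) (b := (n %/ 2)%:R%R) _ (Zn_divn_neq0 (isT : 1 < 2) two_dvd)).
  by move=> i; rewrite t1.
move=> x; rewrite grdh_keys1 // inE => /forallP /(_ j); rewrite Zn_unitE => x_co.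
have x_odd : odd (x j) by rewrite -coprime2n; apply: coprime_dvdl two_dvd x_co.
apply: val_inj; rewrite /= !val_Zn_divn //.
rewrite -(odd_double_half (x j)) x_odd -muln2 mulnDr muln1 mulnCA divnK //.
by rewrite addnC modnMDl modn_small // ltn_Pdiv.
Qed.

Lemma natr_pdiv_pred : ((pdiv n)%:R - 1 = (pdiv n).-1%:R :> rat)%R.
Proof. by rewrite -subn1 natrB // pdiv_gt0. Qed.

(* If [D j != 0], the products [D j * v] with [v] ranging over [p - 1] units
   that are pairwise distinct modulo a prime [q >= p] are pairwise distinct. *)
Lemma rdh_adu (t : 'I_k -> nat) : (forall i, t i = 1) ->
  almost_delta_universal n t (1 / ((pdiv n)%:R - 1))%R.
Proof.
move=> t1 m m' b m_neq; rewrite rdh_probE // natr_pdiv_pred.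
set D := fun i => (m i - m' i)%R.
have [j Dj] : exists j, D j != 0%R.
  apply/existsP; apply: contraNT m_neq => /existsPn D0.
  by apply/eqP/ffunP => i; apply/eqP; rewrite -subr_eq0; apply/negbNE/D0.
have [q [q_pr q_dvd Dq]] := Zn_mulr_cancel_mod_prime Dj.
have p_gt1 : 1 < pdiv n by rewrite prime_gt1 ?pdiv_prime.
have [|v Hv] := Zn_units_with_residues (s := (pdiv n).-1) q_pr q_dvd.
  by rewrite prednK ?(leq_trans _ (pdiv_min_dvd (prime_gt1 q_pr) q_dvd)) // ltnW.
apply: ler_ratio_inv; first by rewrite -(grdh_keys1 t1) grdh_keys_gt0 // => i; rewrite t1.
  by rewrite -ltnS prednK // ltnW.
apply: (card_keys_with_sum_le (D := D) (j := j) (fun a => (Hv a).1)).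
by move=> a a' /Dq; rewrite (Hv a).2 (Hv a').2 => -[] /val_inj.
Qed.

(* [(n/p) * u] only depends on [u mod p], which runs over the [p - 1] nonzero
   residues equally often as [u] ranges over the units. *)
Lemma rdh_tight (t : 'I_k -> nat) : 0 < k -> (forall i, t i = 1) ->
  exists (m m' : {ffun 'I_k -> Zn}) (b : Zn),
    m != m' /\ grdh_prob t m m' b = (1 / ((pdiv n)%:R - 1))%R.
Proof.
move=> k_gt0 t1; set p := pdiv n; set d : Zn := (n %/ p)%:R%R; pose j := Ordinal k_gt0.
have p_pr : prime p by apply: pdiv_prime.
have p_dvd : p %| n by apply: pdiv_dvd.
have p_gt0 := prime_gt0 p_pr.
exists (delta_ffun j d), [ffun => 0%R], d.
rewrite delta_ffun_eq0 Zn_divn_neq0 ?prime_gt1 //; split=> //.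
rewrite rdh_probE // natr_pdiv_pred; set D := fun i => (delta_ffun j d i - _ i)%R.
have Dj : D j = d by rewrite /D !ffunE eqxx subr0.
have D0 l : l != j -> D l = 0%R by move=> /negbTE lj; rewrite /D !ffunE lj subr0.
have [|v Hv] := Zn_units_with_residues (s := p.-1) p_pr p_dvd; first by rewrite prednK.
have Dv_inj : injective (fun a => D j * v a)%R.
  by move=> a a' /=; rewrite Dj => /Zn_mul_ndivp_eq; rewrite (Hv a).2 (Hv a').2 => -[] /val_inj.
have Dv_onto u : u \is a GRing.unit -> exists a, (D j * u = D j * v a)%R.
  move=> u_unit; have u_gt0 := Zn_unit_mod_prime_gt0 u_unit p_pr p_dvd.
  have lt_up : (u %% p).-1 < p.-1 by rewrite -ltnS !prednK ?ltn_pmod.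
  exists (Ordinal lt_up); rewrite Dj; apply/Zn_mul_ndivp_eq.
  by rewrite (Hv _).2 /= prednK.
have card_eq := card_keys_with_sum_eq (fun a => (Hv a).1) Dv_inj D0 Dv_onto.
rewrite -Dj -card_eq ratio_mul_inv // card_eq -(grdh_keys1 t1).
by apply: grdh_keys_gt0 => i; rewrite t1.
Qed.

Lemma grdh_adu_lt1 (t : 'I_k -> nat) eps : 0 < k -> (forall i, 0 < t i /\ t i %| n) ->
  (eps < 1)%R -> almost_delta_universal n t eps -> odd n /\ forall i, t i = 1.
Proof.
move=> k_gt0 t_dvd eps_lt1 adu.
have t1 i : t i = 1.
  by apply/eqP; apply: contraT => ti_neq1; case: (grdh_not_adu_gcd t_dvd ti_neq1 eps_lt1).
split=> //; apply: contraT => n_even.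
by case: (rdh_not_adu_even (Ordinal k_gt0) t1 n_even eps_lt1).
Qed.

End GRDH.

Theorem mainTheorem4 (n k : nat) (t : 'I_k -> nat)
  (hn : 1 < n) (hk : 0 < k) (ht : forall i, 0 < t i /\ t i %| n) :
  ((exists eps : rat, (eps < 1)%R /\ almost_delta_universal n t eps)
     <-> (odd n /\ forall i, t i = 1))
  /\
  ((odd n /\ forall i, t i = 1) ->
     almost_delta_universal n t (1 / ((pdiv n)%:R - 1))%R
     /\ exists (m m' : {ffun 'I_k -> 'I_n}) (b : 'I_n),
          m != m' /\ grdh_prob t m m' b = (1 / ((pdiv n)%:R - 1))%R).
Proof.
case: n hn ht => [|[|n']] // n_gt1 ht.
split; last by case=> _ t1; split; [exact: rdh_adu | exact: rdh_tight].
split=> [[eps [eps_lt1 adu]] | [n_odd t1]]; first exact: grdh_adu_lt1 adu.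
exists (1 / ((pdiv n'.+2)%:R - 1))%R.
by split; [exact: inv_pdiv_pred_lt1 | exact: rdh_adu].
Qed.
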